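(* Let $n\ge1$. For all integers $p_n,\dots,p_1,q\ge0$, the unit map $\eta\Delta[p_n,\dots,p_1,q]\colon\Delta[p_n,\dots,p_1,q]\to NK\Delta[p_n,\dots,p_1,q]$ of the adjunction $K\dashv N$ is a Reedy equivalence in $\mathrm{s}^n\mathcal S$.
   Context: An $n$-relative category $\mathcal C=(a\mathcal C,v_1\mathcal C,\dots,v_n\mathcal C,w\mathcal C)$ consists of a category $a\mathcal C$ and subcategories $v_1\mathcal C,\dots,v_n\mathcal C,w\mathcal C\subset a\mathcal C$, each containing all objects, with $w\mathcal C\subset v_i\mathcal C$ for all $i$, such that (i) every map of $a\mathcal C$ is a finite composite of maps in the $v_i\mathcal C$, and (ii) every relation in $a\mathcal C$ is a consequence of the commutativity of squares $y_2x_1=x_2y_1$ with $x_1,x_2\in v_i\mathcal C$, $y_1,y_2\in v_j\mathcal C$. $\mathbf{Rel}^n\mathbf{Cat}$ is the category of small $n$-relative categories and functors of ambient categories preserving $w$ and each $v_i$. For $p\ge0$, $\mathbf p$ is the poset $0\to\cdots\to p$ and $|\mathbf p|$ its discrete subcategory; $\mathbf p_n^{v_n}\times\cdots\times\mathbf p_1^{v_1}\times\mathbf q^w$ is the $n$-relative category with ambient category $\mathbf p_n\times\cdots\times\mathbf p_1\times\mathbf q$, $w=|\mathbf p_n|\times\cdots\times|\mathbf p_1|\times\mathbf q$, $v_i=|\mathbf p_n|\times\cdots\times\mathbf p_i\times\cdots\times|\mathbf p_1|\times\mathbf q$. $\mathrm{s}^n\mathcal S$ is the category of $(n+1)$-simplicial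 sets with multisimplices indexed by $(p_n,\dots,p_1,q)$ and standard (representable) multisimplices $\Delta[p_n,\dots,p_1,q]$. $N\mathcal C$ has as $(p_n,\dots,p_1,q)$-simplices the relative functors $\mathbf p_n^{v_n}\times\cdots\times\mathbf p_1^{v_1}\times\mathbf q^w\to\mathcal C$; $K$ is its left adjoint, with $K\Delta[p_n,\dots,p_1,q]=\mathbf p_n^{v_n}\times\cdots\times\mathbf p_1^{v_1}\times\mathbf q^w$. A map $X\to Y$ in $\mathrm{s}^n\mathcal S$ is a Reedy equivalence if for each $(p_n,\dots,p_1)$ the map of simplicial sets $X_{p_n,\dots,p_1,\bullet}\to Y_{p_n,\dots,p_1,\bullet}$ is a weak equivalence. *)

From Stdlib Require Import FunctionalExtensionality ProofIrrelevance Relations.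
From mathcomp Require Import all_boot.

Set Implicit Arguments.
Unset Strict Implicit.
Unset Printing Implicit Defensive.

Record mono (m k : nat) := Mono {
  monofun :> 'I_m.+1 -> 'I_k.+1;
  monoP : forall i j : 'I_m.+1, i <= j -> monofun i <= monofun j }.

Lemma mono_ext m k (f g : mono m k) : (forall i, f i = g i) -> f = g.
Proof.
case: f => f fP; case: g => g gP /= H.
have E : f = g by apply: functional_extensionality.
subst g; by rewrite (proof_irrelevance _ fP gP).
Qed.

Definition mono_id k : mono k k := @Mono k k id (fun i j h => h).
Definition mono_comp m k l (f : mono m k) (g : mono k l) : mono m l :=
  @Mono m l (fun i => g (f i)) (fun i j h => monoP g (monoP f h)).

Record sSet := SSet {
  sobj :> nat -> Type;
  sact : forall m k, mono m k -> sobj k -> sobj m;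
  sact_id : forall k (x : sobj k), sact (mono_id k) x = x;
  sact_comp : forall m k l (f : mono m k) (g : mono k l) (x : sobj l),
      sact (mono_comp f g) x = sact f (sact g x) }.
Arguments sact {s m k}.

Record sMap (X Y : sSet) := SMap {
  smap : forall k, X k -> Y k;
  smap_nat : forall m k (f : mono m k) (x : X k),
      smap (sact f x) = sact f (smap x) }.
Arguments smap {X Y} _ {k}.

Definition scomp (X Y Z : sSet) (g : sMap Y Z) (f : sMap X Y) : sMap X Z.
Proof.
refine (@SMap X Z (fun k x => smap g (smap f x)) _).
by move=> m k a x; rewrite smap_nat smap_nat.
Defined.

Definition sprod (X Y : sSet) : sSet.
Proof.
refine (@SSet (fun k => (X k * Y k)%type)
              (fun m k f xy => (sact f xy.1, sact f xy.2)) _ _).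
- by move=> k [x y] /=; rewrite !sact_id.
- by move=> m k l f g [x y] /=; rewrite !sact_comp.
Defined.

Definition Delta (n : nat) : sSet.
Proof.
refine (@SSet (fun k => mono k n) (fun m k f a => mono_comp f a) _ _).
- by move=> k a; apply: mono_ext.
- by move=> m k l f g a; apply: mono_ext.
Defined.

Definition horn_pred n (k : 'I_n.+1) m (a : mono m n) : Prop :=
  exists i : 'I_n.+1, i != k /\ forall j, a j != i.

Lemma horn_pred_comp n (k : 'I_n.+1) m l (f : mono m l) (a : mono l n) :
  horn_pred k a -> horn_pred k (mono_comp f a).
Proof. by case=> i [ik H]; exists i; split=> // j /=; apply: H. Qed.

Definition Horn n (k : 'I_n.+1) : sSet.
Proof.
refine (@SSet (fun m => {a : mono m n | horn_pred k a})
   (fun m l f a => exist _ (mono_comp f (proj1_sig a))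
                         (horn_pred_comp f (proj2_sig a))) _ _).
- move=> l [a Ha]; apply: eq_sig_hprop => /=.
  + by move=> x; apply: proof_irrelevance.
  + by apply: mono_ext.
- move=> m l l' f g [a Ha]; apply: eq_sig_hprop => /=.
  + by move=> x; apply: proof_irrelevance.
  + by apply: mono_ext.
Defined.

(* Kan complexes: every horn Lambda^{n+1}_k -> Z extends along
   Lambda^{n+1}_k -> Delta[n+1] (a map Delta[n+1] -> Z being an
   (n+1)-simplex z, by Yoneda). *)
Definition Kan (Z : sSet) : Prop :=
  forall n (k : 'I_n.+2) (h : sMap (Horn k) Z),
    exists z : Z n.+1, forall m (a : Horn k m), smap h a = sact (proj1_sig a) z.

Definition mono_const k (c : 'I_2) : mono k 1 :=
  @Mono k 1 (fun _ => c) (fun _ _ _ => leqnn _).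

Definition elem_htpy (Y Z : sSet) (g h : sMap Y Z) : Prop :=
  exists H : sMap (sprod Y (Delta 1)) Z,
    forall k (y : Y k),
      smap H ((y, mono_const k ord0) : sprod Y (Delta 1) k) = smap g y /\
      smap H ((y, mono_const k ord_max) : sprod Y (Delta 1) k) = smap h y.

Definition htpc (Y Z : sSet) : relation (sMap Y Z) :=
  clos_refl_sym_trans _ (@elem_htpy Y Z).

Definition weq (X Y : sSet) (f : sMap X Y) : Prop :=
  forall Z : sSet, Kan Z ->
    (forall g : sMap X Z, exists g' : sMap Y Z, htpc (scomp g' f) g) /\
    (forall g h : sMap Y Z, htpc (scomp g f) (scomp h f) -> htpc g h).

Definition robj n (r : 'I_n -> nat) (s : nat) : Type :=
  ((forall i : 'I_n, 'I_(r i).+1) * 'I_s.+1)%type.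

Definition rle n (r : 'I_n -> nat) s (x y : robj r s) : Prop :=
  (forall i, x.1 i <= y.1 i) /\ x.2 <= y.2.
(* morphisms in w = |p_n| x ... x |p_1| x q *)
Definition rw n (r : 'I_n -> nat) s (x y : robj r s) : Prop :=
  rle x y /\ forall i, x.1 i = y.1 i.
(* morphisms in v_i = |p_n| x ... x p_i x ... x |p_1| x q *)
Definition rv n (r : 'I_n -> nat) s (i : 'I_n) (x y : robj r s) : Prop :=
  rle x y /\ forall j, j != i -> x.1 j = y.1 j.

Record relfun n (r p : 'I_n -> nat) (s q : nat) := RelFun {
  relfn :> robj r s -> robj p q;
  relfn_le : forall x y, rle x y -> rle (relfn x) (relfn y);
  relfn_w : forall x y, rw x y -> rw (relfn x) (relfn y);
  relfn_v : forall i x y, rv i x y -> rv i (relfn x) (relfn y) }.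

Lemma relfun_ext n (r p : 'I_n -> nat) s q (F G : relfun r p s q) :
  (forall x, F x = G x) -> F = G.
Proof.
case: F => F F1 F2 F3; case: G => G G1 G2 G3 /= H.
have E : F = G by apply: functional_extensionality.
subst G.
by rewrite (proof_irrelevance _ F1 G1) (proof_irrelevance _ F2 G2)
           (proof_irrelevance _ F3 G3).
Qed.

Definition rpre n (r : 'I_n -> nat) s' s (a : mono s' s) (x : robj r s') : robj r s :=
  (x.1, a x.2).

Lemma rpre_le n (r : 'I_n -> nat) s' s (a : mono s' s) x y :
  rle x y -> rle (@rpre n r s' s a x) (rpre a y).
Proof. by case=> H1 H2; split=> //=; apply: monoP. Qed.

Lemma rpre_w n (r : 'I_n -> nat) s' s (a : mono s' s) x y :
  rw x y -> rw (@rpre n r s' s a x) (rpre a y).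
Proof. by case=> H1 H2; split=> //; apply: rpre_le. Qed.

Lemma rpre_v n (r : 'I_n -> nat) s' s (a : mono s' s) i x y :
  rv i x y -> rv i (@rpre n r s' s a x) (rpre a y).
Proof. by case=> H1 H2; split=> //; apply: rpre_le. Qed.

Definition relfun_pre n (r p : 'I_n -> nat) s' s q (a : mono s' s)
  (F : relfun r p s q) : relfun r p s' q :=
  @RelFun n r p s' q (fun x => F (rpre a x))
    (fun x y h => relfn_le F (rpre_le a h))
    (fun x y h => relfn_w F (rpre_w a h))
    (fun i x y h => relfn_v F (rpre_v a h)).

(* The column (N K Delta[p_n,...,p_1,q])_{r_n,...,r_1,bullet}: its
   s-simplices are the relative functors
   r_n^{v_n} x ... x r_1^{v_1} x s^w -> p_n^{v_n} x ... x p_1^{v_1} x q^w,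
   using K Delta[p_n,...,p_1,q] = p_n^{v_n} x ... x p_1^{v_1} x q^w. *)
Definition NKcol n (p : 'I_n -> nat) (q : nat) (r : 'I_n -> nat) : sSet.
Proof.
refine (@SSet (fun s => relfun r p s q)
              (fun s' s a F => relfun_pre a F) _ _).
- by move=> s F; apply: relfun_ext => -[x1 x2].
- by move=> m k l f g F; apply: relfun_ext.
Defined.

(* The column Delta[p_n,...,p_1,q]_{r_n,...,r_1,bullet}: its s-simplices
   are tuples of monotone maps [r_i] -> [p_i] and [s] -> [q]. *)
Definition Dcol n (p : 'I_n -> nat) (q : nat) (r : 'I_n -> nat) : sSet.
Proof.
refine (@SSet (fun s => ((forall i : 'I_n, mono (r i) (p i)) * mono s q)%type)
              (fun s' s a ab => (ab.1, mono_comp a ab.2)) _ _).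
- by move=> s [a b] /=; congr pair; apply: mono_ext.
- by move=> m k l f g [a b] /=; congr pair; apply: mono_ext.
Defined.

(* The unit eta_{Delta[p]} : Delta[p] -> N K Delta[p] on a column: a
   multisimplex (a_n,...,a_1,b) is sent to K of it, the product functor
   a_n x ... x a_1 x b. *)
Definition eta_fun n (p : 'I_n -> nat) q (r : 'I_n -> nat) s
  (ab : (forall i : 'I_n, mono (r i) (p i)) * mono s q) (x : robj r s) : robj p q :=
  (fun i => ab.1 i (x.1 i), ab.2 x.2).

Lemma eta_le n (p : 'I_n -> nat) q (r : 'I_n -> nat) s ab x y :
  rle x y -> rle (@eta_fun n p q r s ab x) (eta_fun ab y).
Proof. by case=> H1 H2; split=> [i|] /=; apply: monoP. Qed.

Lemma eta_w n (p : 'I_n -> nat) q (r : 'I_n -> nat) s ab x y :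
  rw x y -> rw (@eta_fun n p q r s ab x) (eta_fun ab y).
Proof. by case=> H1 H2; split; [apply: eta_le | move=> i /=; rewrite H2]. Qed.

Lemma eta_v n (p : 'I_n -> nat) q (r : 'I_n -> nat) s ab i x y :
  rv i x y -> rv i (@eta_fun n p q r s ab x) (eta_fun ab y).
Proof.
by case=> H1 H2; split; [apply: eta_le | move=> j ji /=; rewrite H2].
Qed.

Definition eta_rel n (p : 'I_n -> nat) q (r : 'I_n -> nat) s ab : relfun r p s q :=
  @RelFun n r p s q (@eta_fun n p q r s ab)
    (fun x y h => eta_le ab h) (fun x y h => eta_w ab h)
    (fun i x y h => eta_v ab h).

Definition eta_col n (p : 'I_n -> nat) (q : nat) (r : 'I_n -> nat) :
  sMap (Dcol p q r) (NKcol p q r).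
Proof.
refine (@SMap (Dcol p q r) (NKcol p q r) (fun s ab => eta_rel ab) _).
by move=> m k f [a b]; apply: relfun_ext.
Defined.

(* The unit is a strong deformation retraction on every column.  In a relative
   functor F : r^v x s^w -> p^v x q^w the i-th p-coordinate of F x depends only
   on the i-th coordinate of x, since moving along w, or along v_j for j <> i,
   cannot change it; so this part of F is a family of monotone maps a_i.
   Together with b := F restricted to the edge {0} x s this gives a retraction
   F |-> (a, b) of the unit.  The q-coordinate of F x dominates that of
   F (0, x_q), which yields a homotopy over Delta[1] from the unit composed with
   the retraction to the identity, and a deformation retraction induces
   bijections on homotopy classes of maps into any Kan complex. *)
From Stdlib Require Import FunctionalExtensionality Relations.
From mathcomp Require Import all_boot zify.

Set Implicit Arguments.
Unset Strict Implicit.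
Unset Printing Implicit Defensive.

Definition sproj1 (X Y : sSet) : sMap (sprod X Y) X :=
  @SMap (sprod X Y) X (fun k xy => xy.1) (fun m k a xy => erefl).

Definition sprod_mapl (X X' Y : sSet) (u : sMap X X') :
  sMap (sprod X Y) (sprod X' Y).
Proof.
refine (@SMap (sprod X Y) (sprod X' Y) (fun k xy => (smap u xy.1, xy.2)) _).
by move=> m k a [x y]; rewrite /= smap_nat.
Defined.

Lemma elem_htpy_eq (Y Z : sSet) (g h : sMap Y Z) :
  (forall k (y : Y k), smap g y = smap h y) -> elem_htpy g h.
Proof. by move=> gh; exists (scomp g (sproj1 Y (Delta 1))) => k y /=. Qed.

Lemma htpc_precomp (X Y Z : sSet) (f : sMap X Y) (g h : sMap Y Z) :
  htpc g h -> htpc (scomp g f) (scomp h f).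
Proof.
elim=> [g' h' [H H01] | g' | g' h' _ IH | g' h' k' _ IH1 _ IH2].
- by apply: rst_step; exists (scomp H (sprod_mapl (Delta 1) f)) => k y /=.
- exact: rst_refl.
- exact: rst_sym.
- exact: rst_trans IH2.
Qed.

Lemma weq_deformation_retract (X Y : sSet) (f : sMap X Y) (rho : sMap Y X)
    (H : sMap (sprod Y (Delta 1)) Y) :
  (forall k (x : X k), smap rho (smap f x) = x) ->
  (forall k (y : Y k),
     smap H ((y, mono_const k ord0) : sprod Y (Delta 1) k) = smap f (smap rho y)) ->
  (forall k (y : Y k),
     smap H ((y, mono_const k ord_max) : sprod Y (Delta 1) k) = y) ->
  weq f.
Proof.
move=> rhoK H0 H1 Z _; split.
  move=> g; exists (scomp g rho); apply/rst_step/elem_htpy_eq => k x /=.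
  by rewrite rhoK.
move=> g h gh.
have retr_htpc (g0 : sMap Y Z) : htpc (scomp (scomp g0 f) rho) g0.
  by apply: rst_step; exists (scomp g0 H) => k y /=; rewrite H0 H1.
apply: rst_trans (retr_htpc h); apply: rst_trans (htpc_precomp rho gh).
exact: rst_sym (retr_htpc g).
Qed.

Section RelativeFunctors.
Variables (n : nat) (p : 'I_n -> nat) (q : nat) (r : 'I_n -> nat).
Local Notation vertex := (forall j : 'I_n, 'I_(r j).+1).

Definition diag_vertex (k : nat) : vertex :=
  fun j => inord (minn k (r j)).

Lemma diag_vertexE k j : diag_vertex k j = minn k (r j) :> nat.
Proof. by rewrite inordK // ltnS geq_minr. Qed.

Lemma diag_vertex_ord i (k : 'I_(r i).+1) : diag_vertex k i = k.
Proof. by apply: val_inj; rewrite /= diag_vertexE; have := ltn_ord k; lia. Qed.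

Variable s : nat.
Implicit Types (F : relfun r p s q).

Lemma relfun_fst_indep_snd F (x1 : vertex) t t' i :
  (F (x1, t)).1 i = (F (x1, t')).1 i.
Proof.
wlog tt' : t t' / t <= t'.
  by move=> W; case: (leqP t t') => [/W // | /ltnW /W ->].
have xx' : rw ((x1, t) : robj r s) (x1, t') by [].
by case: (relfn_w F xx') => _ ->.
Qed.

Definition interp (x1 y1 : vertex) (k : nat) : vertex :=
  fun j => if j < k then y1 j else x1 j.

Lemma interp_succ_v (x1 y1 : vertex) k (kn : k < n) t :
  (forall j, x1 j <= y1 j) ->
  rv (Ordinal kn) ((interp x1 y1 k, t) : robj r s) (interp x1 y1 k.+1, t).
Proof.
move=> xy; split; first split=> // j /=.
  by rewrite /interp ltnS; case: ltngtP => // jk; rewrite ?leqnn ?xy.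
move=> j /= jk; rewrite /interp (ltnS j k) (leq_eqVlt j k).
by have /negbTE -> : j != k :> nat by apply: contra jk => /eqP jk; apply/eqP/val_inj.
Qed.

Lemma relfun_fst_coord_eq F (x1 y1 : vertex) t i :
  (forall j, x1 j <= y1 j) -> x1 i = y1 i ->
  (F (x1, t)).1 i = (F (y1, t)).1 i.
Proof.
move=> xy xyi.
have interp_n : interp x1 y1 n = y1.
  by apply: functional_extensionality_dep => j; rewrite /interp ltn_ord.
suff chain k : k <= n -> (F (interp x1 y1 k, t)).1 i = (F (x1, t)).1 i.
  by rewrite -interp_n chain.
elim: k => [_ | k IH kn].
  by rewrite (_ : interp x1 y1 0 = x1) //; apply: functional_extensionality_dep.
rewrite -IH ?(ltnW kn) //.
case: (eqVneq (Ordinal kn) i) => [ki | ki].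
  rewrite (_ : interp x1 y1 k.+1 = interp x1 y1 k) //.
  apply: functional_extensionality_dep => j.
  rewrite /interp (ltnS j k) (leq_eqVlt j k); case: eqVneq => //= jk.
  have ji : j = i by rewrite -ki; apply: val_inj.
  by rewrite jk ltnn ji xyi.
by case: (relfn_v F (interp_succ_v kn t xy)) => _ ->; rewrite // eq_sym.
Qed.

Lemma relfun_fst_diag F (x1 : vertex) t t' i :
  (F (x1, t)).1 i = (F (diag_vertex (x1 i), t')).1 i.
Proof.
pose z1 j : 'I_(r j).+1 := if j == i then x1 j else ord0.
have z1i : z1 i = x1 i by rewrite /z1 eqxx.
rewrite -(@relfun_fst_coord_eq F z1 x1) //; last first.
  by move=> j; rewrite /z1; case: eqVneq => [-> |].
rewrite (@relfun_fst_coord_eq F z1 (diag_vertex (x1 i))); last first.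
- by apply: val_inj; rewrite /= z1i diag_vertexE; have := ltn_ord (x1 i); lia.
- move=> j; rewrite /z1; case: eqVneq => [-> | //].
  by rewrite diag_vertexE; have := ltn_ord (x1 i); lia.
exact: relfun_fst_indep_snd.
Qed.

Definition retr_mono F i : mono (r i) (p i).
Proof.
refine (@Mono (r i) (p i) (fun k => (F (diag_vertex k, ord0)).1 i) _).
move=> k k' kk'.
have le_diag : rle ((diag_vertex k, ord0) : robj r s) (diag_vertex k', ord0).
  by split=> // j /=; rewrite !diag_vertexE; lia.
by case: (relfn_le F le_diag) => /(_ i).
Defined.

Definition retr_last F : mono s q.
Proof.
refine (@Mono s q (fun t => (F (diag_vertex 0, t)).2) _).
move=> t t' tt'.
have le_edge : rle ((diag_vertex 0, t) : robj r s) (diag_vertex 0, t') by [].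
by case: (relfn_le F le_edge).
Defined.

(* Monotone because the edge {0} x s lies below every object with the same
   last coordinate. *)
Definition htpy_fun F (c : mono s 1) (x : robj r s) : robj p q :=
  ((F x).1, if c x.2 == ord0 then (F (diag_vertex 0, x.2)).2 else (F x).2).

Lemma htpy_le F c x y : rle x y -> rle (htpy_fun F c x) (htpy_fun F c y).
Proof.
move=> xy; have [Fxy1 Fxy2] := relfn_le F xy; split=> //=.
have cxy := monoP c (proj2 xy).
case: eqVneq => cx; case: eqVneq => cy.
- have le_edge : rle ((diag_vertex 0, x.2) : robj r s) (diag_vertex 0, y.2).
    by split=> //; case: xy.
  by case: (relfn_le F le_edge).
- have le_edge : rle ((diag_vertex 0, x.2) : robj r s) y.
    by split=> [j | ]; [rewrite /= diag_vertexE min0n | case: xy].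
  by case: (relfn_le F le_edge).
- by move: cxy cx; rewrite cy -val_eqE /=; lia.
- exact: Fxy2.
Qed.

Definition htpy_rel F c : relfun r p s q :=
  @RelFun n r p s q (htpy_fun F c) (fun x y xy => htpy_le F c xy)
    (fun x y xy => conj (htpy_le F c (proj1 xy)) (proj2 (relfn_w F xy)))
    (fun i x y xy => conj (htpy_le F c (proj1 xy)) (proj2 (relfn_v F xy))).

End RelativeFunctors.

Section UnitColumn.
Variables (n : nat) (p : 'I_n -> nat) (q : nat) (r : 'I_n -> nat).

Definition nk_retraction : sMap (NKcol p q r) (Dcol p q r).
Proof.
refine (@SMap (NKcol p q r) (Dcol p q r)
          (fun s F => (retr_mono F, retr_last F)) _).
move=> m k a F /=; congr pair; last exact: mono_ext.
apply: functional_extensionality_dep => i; apply: mono_ext => j /=.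
exact: relfun_fst_indep_snd.
Defined.

Definition nk_homotopy : sMap (sprod (NKcol p q r) (Delta 1)) (NKcol p q r).
Proof.
refine (@SMap (sprod (NKcol p q r) (Delta 1)) (NKcol p q r)
          (fun s Fc => htpy_rel Fc.1 Fc.2) _).
by move=> m k a [F c]; apply: relfun_ext.
Defined.

Lemma nk_retractionK k (ab : Dcol p q r k) :
  smap nk_retraction (smap (eta_col p q r) ab) = ab.
Proof.
case: ab => a b /=; congr pair; last exact: mono_ext.
apply: functional_extensionality_dep => i; apply: mono_ext => j /=.
by rewrite diag_vertex_ord.
Qed.

Lemma nk_homotopy0 k (F : NKcol p q r k) :
  smap nk_homotopy ((F, mono_const k ord0) : sprod _ (Delta 1) k)
  = smap (eta_col p q r) (smap nk_retraction F).
Proof.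
apply: relfun_ext => -[x1 t]; congr pair => /=.
by apply: functional_extensionality_dep => i; apply: relfun_fst_diag.
Qed.

Lemma nk_homotopy1 k (F : NKcol p q r k) :
  smap nk_homotopy ((F, mono_const k ord_max) : sprod _ (Delta 1) k) = F.
Proof. by apply: relfun_ext => x /=; rewrite /htpy_fun /=; case: (F x). Qed.

End UnitColumn.

Theorem proposition4p6 (n : nat) (hn : 1 <= n) (p : 'I_n -> nat) (q : nat) :
  forall r : 'I_n -> nat, weq (eta_col p q r).
Proof.
move=> r.
apply: (weq_deformation_retract (rho := nk_retraction p q r) (H := nk_homotopy p q r)).
- exact: nk_retractionK.
- exact: nk_homotopy0.
- exact: nk_homotopy1.
Qed.
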